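(* Let $A$ be a real $m\times n$ matrix with $r:=\operatorname{rank}(A)<n$ and let $k:=n-r$. Let $\beta\in\mathbb R_m$, $\varepsilon\ge0$, $F\in S(A,\beta,\varepsilon)$, and let $y\in\mathbb R_n$, $\delta\ge0$ with $\|Ay^T-\beta^T\|_\infty\le\delta$. Put $D:=(A^T)^\dagger$. Fix a basis $(x_1^T,\dots,x_k^T)$ of $\ker(A)$, let $x_{sj}$ be the $j$-th coordinate of $x_s$, and let $X:=(x_{sj})$ be the $k\times n$ matrix with rows $x_1,\dots,x_k$. Define $\pi_s(u):=u^{x_s}$ for $u\in\mathbb R_n^+$, and for $w\in\mathbb R_k^+$ define $$\psi(w):=\exp\big(X^\dagger\log(w)^T\big)\in\mathbb R_n^+,\qquad G(w):=F(\psi(w))/\psi(w)^y.$$ Let $M:=\max\{|x_{sj}|:1\le s\le k,\,1\le j\le n\}$ and let $K>1$. Then for every $v=(v_1,\dots,v_n)\in\mathbb R_n^+$ with $K^{-1}\le v_i\le K$ for all $i$, $$|F(v)-G(\pi_1(v),\dots,\pi_k(v))v^y|\le|F(v)|\Big((1+\varepsilon)K^{m\delta\|D\|(nM\|X^\dagger\|+1)}-1\Big).$$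
   Context: $\mathbb R_m$ denotes real row vectors of length $m$, $\mathbb R_m^+$ those with all entries strictly positive (similarly $\mathbb R_n^+,\mathbb R_k^+$). For $c\in\mathbb R_m^+$ and $\alpha\in\mathbb R_m$, $c^\alpha:=\prod_i c_i^{\alpha_i}$ (similarly $u^x$, $v^y$). For a row vector $w=(w_1,\dots,w_k)$ with positive entries, $\log(w):=(\log w_1,\dots,\log w_k)$ (natural logarithm), and for a column vector $z=(z_1,\dots,z_n)^T$, $\exp(z):=(e^{z_1},\dots,e^{z_n})$ (a row vector). For a real $m\times n$ matrix $A$ with columns $\alpha_1^T,\dots,\alpha_n^T$, $\beta\in\mathbb R_m$ and $\varepsilon\ge0$, $S(A,\beta,\varepsilon)$ is the set of all $F:\mathbb R_n^+\to\mathbb R$ with $$|F(v_1c^{\alpha_1},\dots,v_nc^{\alpha_n})-F(v_1,\dots,v_n)c^\beta|\le\varepsilon|F(v_1,\dots,v_n)|c^\beta$$ for all $v_1,\dots,v_n>0$ and all $c\in\mathbb R_m^+$. $B^\dagger$ is the Moore–Penrose pseudoinverse of a real matrix $B$; $\|\cdot\|_\infty$ is the maximum norm and $\|B\|=\max_i\sum_j|b_{ij}|$ the induced matrix norm. *)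

From Stdlib Require Import Reals.
From mathcomp Require Import all_boot.
Set Implicit Arguments.
Unset Strict Implicit.
Unset Printing Implicit Defensive.

Local Open Scope R_scope.

Definition vec (n : nat) := 'I_n -> R.
Definition mat (m n : nat) := 'I_m -> 'I_n -> R.

Definition Rsum (n : nat) (f : 'I_n -> R) : R := \big[Rplus/0]_(j < n) f j.
Definition Rprod (n : nat) (f : 'I_n -> R) : R := \big[Rmult/1]_(j < n) f j.
Definition Rmaxb (n : nat) (f : 'I_n -> R) : R := \big[Rmax/0]_(j < n) f j.

Definition trmat (m n : nat) (B : mat m n) : mat n m := fun j i => B i j.
Definition mulmat (m n p : nat) (B : mat m n) (C : mat n p) : mat m p :=
  fun i l => Rsum (fun j => B i j * C j l).

Definition is_pinv (m n : nat) (B : mat m n) (P : mat n m) : Prop :=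
  mulmat (mulmat B P) B = B /\
  mulmat (mulmat P B) P = P /\
  trmat (mulmat B P) = mulmat B P /\
  trmat (mulmat P B) = mulmat P B.

Definition vpow (n : nat) (c : vec n) (a : vec n) : R :=
  Rprod (fun i => Rpower (c i) (a i)).

Definition posv (n : nat) (v : vec n) : Prop := forall i, 0 < v i.

Definition colv (m n : nat) (A : mat m n) (j : 'I_n) : vec m := fun i => A i j.
Definition rowv (k n : nat) (X : mat k n) (s : 'I_k) : vec n := fun j => X s j.

(* The class S(A, beta, eps); F is only ever used on R_n^+. *)
Definition inS (m n : nat) (A : mat m n) (beta : vec m) (eps : R)
  (F : vec n -> R) : Prop :=
  forall (v : vec n) (c : vec m), posv v -> posv c ->
    Rabs (F (fun j => v j * vpow c (colv A j)) - F v * vpow c beta)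
      <= eps * Rabs (F v) * vpow c beta.

(* maximum norm of a vector and induced (max row sum) matrix norm *)
Definition normInf (n : nat) (v : vec n) : R := Rmaxb (fun i => Rabs (v i)).
Definition mnorm (m n : nat) (B : mat m n) : R :=
  Rmaxb (fun i => Rsum (fun j => Rabs (B i j))).

Definition resid (m n : nat) (A : mat m n) (y : vec n) (beta : vec m) : vec m :=
  fun i => Rsum (fun j => A i j * y j) - beta i.

Definition kernel_basis (m n k : nat) (A : mat m n) (X : mat k n) : Prop :=
  (forall s i, Rsum (fun j => A i j * X s j) = 0) /\
  (forall c : vec k, (forall j, Rsum (fun s => c s * X s j) = 0) ->
     forall s, c s = 0) /\
  (forall x : vec n, (forall i, Rsum (fun j => A i j * x j) = 0) ->
     exists c : vec k, forall j, x j = Rsum (fun s => c s * X s j)).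

Definition psi (k n : nat) (Xd : mat n k) (w : vec k) : vec n :=
  fun j => exp (Rsum (fun s => Xd j s * ln (w s))).

(* Write u = ln v. The correction w = X^+ X u - u is orthogonal to ker A, and
   A^T D is the orthogonal projection onto (ker A)^perp, so z = D w solves
   A^T z = w. Thus c = exp z moves v to v c^A = exp (X^+ X u) = psi(pi(v)), and
   the defining inequality of S(A, beta, eps) compares F(psi(pi(v))) with F(v).
   The remaining factor relating v^y and psi(pi(v))^y is exp <A y - beta, z>,
   whose exponent is at most m delta |D| (n M |X^+| + 1) ln K in absolute
   value because |u_j| <= ln K. *)
From HB Require Import structures.
From Stdlib Require Import Reals Lra FunctionalExtensionality.
From mathcomp Require Import all_boot.
Set Implicit Arguments.
Unset Strict Implicit.
Unset Printing Implicit Defensive.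
Local Open Scope R_scope.

HB.instance Definition _ := Monoid.isComLaw.Build R 0 Rplus
  (fun a b c => esym (Rplus_assoc a b c)) Rplus_comm Rplus_0_l.
HB.instance Definition _ := Monoid.isComLaw.Build R 1 Rmult
  (fun a b c => esym (Rmult_assoc a b c)) Rmult_comm Rmult_1_l.
HB.instance Definition _ := Monoid.isMulLaw.Build R 0 Rmult Rmult_0_l Rmult_0_r.
HB.instance Definition _ :=
  Monoid.isAddLaw.Build R Rmult Rplus Rmult_plus_distr_r Rmult_plus_distr_l.

Section FiniteSums.

Context {n : nat}.
Implicit Types f g : 'I_n -> R.

Lemma Rsum_ext f g : (forall j, f j = g j) -> Rsum f = Rsum g.
Proof. by move=> fg; apply: eq_bigr => j _. Qed.

Lemma Rsum_add f g : Rsum (fun j => f j + g j) = Rsum f + Rsum g.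
Proof. exact: big_split. Qed.

Lemma Rsum_sub f g : Rsum (fun j => f j - g j) = Rsum f - Rsum g.
Proof.
have <- : Rsum (fun j => f j - g j + g j) = Rsum f.
  by apply: Rsum_ext => j; ring.
by rewrite Rsum_add; ring.
Qed.

Lemma Rsum_mull a f : Rsum (fun j => a * f j) = a * Rsum f.
Proof. by rewrite /Rsum big_distrr. Qed.

Lemma Rsum_mulr a f : Rsum (fun j => f j * a) = Rsum f * a.
Proof. by rewrite /Rsum big_distrl. Qed.

Lemma Rsum_const a : Rsum (fun _ : 'I_n => a) = INR n * a.
Proof.
rewrite /Rsum big_const_ord; elim: n => [|p IH] /=; first ring.
by rewrite IH; case: p {IH} => [|p] /=; ring.
Qed.

Lemma Rsum_ge_term f j : (forall i, 0 <= f i) -> f j <= Rsum f.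
Proof.
move=> f0; rewrite /Rsum (bigD1 j) //=.
rewrite -{1}(Rplus_0_r (f j)); apply: Rplus_le_compat_l.
by apply: (big_ind (fun x => 0 <= x)) => [|*|i _]; [lra|lra|exact: f0].
Qed.

Lemma Rabs_Rsum_le f g : (forall j, Rabs (f j) <= g j) -> Rabs (Rsum f) <= Rsum g.
Proof.
move=> fg; apply: (big_ind2 (fun x y => Rabs x <= y)) => [|x1 x2 y1 y2 h1 h2|j _].
- by rewrite Rabs_R0; lra.
- by have := Rabs_triang x1 y1; lra.
- exact: fg.
Qed.

Lemma Rmaxb_ge f j : f j <= Rmaxb f.
Proof.
rewrite /Rmaxb; have : j \in index_enum 'I_n by rewrite mem_index_enum.
elim: (index_enum _) => [|i r IH] //; rewrite in_cons big_cons.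
case/orP => [/eqP <- | jr]; first exact: Rmax_l.
exact: Rle_trans (IH jr) (Rmax_r _ _).
Qed.

Lemma Rmaxb_ge0 f : 0 <= Rmaxb f.
Proof.
rewrite /Rmaxb; elim: (index_enum _) => [|i r IH]; first by rewrite big_nil; lra.
by rewrite big_cons; exact: Rle_trans IH (Rmax_r _ _).
Qed.

End FiniteSums.

Definition mulmv (p q : nat) (B : mat p q) (x : vec q) : vec p :=
  fun i => Rsum (fun j => B i j * x j).
Definition dotv (p : nat) (a b : vec p) : R := Rsum (fun i => a i * b i).
Definition vln (p : nat) (c : vec p) : vec p := fun i => ln (c i).

Definition pinv_correction k n (X : mat k n) (Xd : mat n k) (u : vec n) : vec n :=
  fun j => mulmv Xd (mulmv X u) j - u j.

Lemma mulmv_mulmat p q r (B : mat p q) (C : mat q r) (x : vec r) :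
  mulmv (mulmat B C) x = mulmv B (mulmv C x).
Proof.
apply: functional_extensionality => i; rewrite /mulmv /mulmat.
under Rsum_ext => l do rewrite -Rsum_mulr.
rewrite /Rsum exchange_big -/Rsum; apply: Rsum_ext => j.
by rewrite -Rsum_mull; apply: Rsum_ext => l; ring.
Qed.

Lemma dotv_mulmv p q (a : vec p) (B : mat p q) (x : vec q) :
  dotv a (mulmv B x) = dotv (mulmv (trmat B) a) x.
Proof.
rewrite /dotv /mulmv /trmat.
under Rsum_ext => i do rewrite -Rsum_mull.
under [RHS]Rsum_ext => j do rewrite -Rsum_mulr.
by rewrite /Rsum exchange_big; apply: eq_bigr => j _; apply: eq_bigr => i _; ring.
Qed.

Lemma mulmvB p q (B : mat p q) (x y : vec q) :
  mulmv B (fun j => x j - y j) = fun i => mulmv B x i - mulmv B y i.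
Proof.
apply: functional_extensionality => i; rewrite /mulmv -Rsum_sub.
by apply: Rsum_ext => j; ring.
Qed.

Lemma dotvB p (a x y : vec p) : dotv a (fun j => x j - y j) = dotv a x - dotv a y.
Proof. by rewrite /dotv -Rsum_sub; apply: Rsum_ext => j; ring. Qed.

Lemma dotv0 p (a : vec p) : dotv a (fun _ => 0) = 0.
Proof.
rewrite /dotv (Rsum_ext (g := fun _ => 0)) ?Rsum_const => [|j]; ring.
Qed.

Lemma dotv0l p (a : vec p) : dotv (fun _ => 0) a = 0.
Proof.
rewrite /dotv (Rsum_ext (g := fun _ => 0)) ?Rsum_const => [|j]; ring.
Qed.

Lemma dotv_self_eq0 p (e : vec p) : dotv e e = 0 -> forall j, e j = 0.
Proof.
move=> ee0 j; have : e j * e j <= dotv e e.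
  by apply: Rsum_ge_term => i; nra.
nra.
Qed.

Lemma trmat_mulmat p q r (B : mat p q) (C : mat q r) :
  trmat (mulmat B C) = mulmat (trmat C) (trmat B).
Proof.
do 2 apply: functional_extensionality => ?.
by rewrite /trmat /mulmat; apply: Rsum_ext => l; ring.
Qed.

Lemma pinv_trmat_mulmat p q (B : mat p q) (P : mat q p) :
  is_pinv B P -> mulmat (trmat B) (mulmat B P) = trmat B.
Proof. by case=> BPB [_ [BPsym _]]; rewrite -BPsym -trmat_mulmat BPB. Qed.

Lemma mulmv_pinv_orth m n (A D : mat m n) (w : vec n) :
  is_pinv (trmat A) D ->
  (forall x, mulmv A x = (fun _ => 0) -> dotv x w = 0) ->
  mulmv (trmat A) (mulmv D w) = w.
Proof.
move=> hD w_orth.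
have hAP : mulmat A (mulmat (trmat A) D) = A := pinv_trmat_mulmat hD.
set Pw := mulmv (trmat A) (mulmv D w).
set e := fun j => w j - Pw j.
have Ae0 : mulmv A e = fun _ => 0.
  rewrite /e mulmvB /Pw -(mulmv_mulmat (trmat A) D) -mulmv_mulmat hAP.
  by apply: functional_extensionality => i; ring.
have ee0 : dotv e e = 0.
  rewrite {2}/e dotvB w_orth // /Pw dotv_mulmv.
  by rewrite (_ : mulmv (trmat (trmat A)) e = fun _ => 0) ?dotv0l //; ring.
apply: functional_extensionality => j.
by have := dotv_self_eq0 ee0 j; rewrite /e; lra.
Qed.

Lemma kernel_basis_orth m n k (A : mat m n) (X : mat k n) (w : vec n) :
  kernel_basis A X -> mulmv X w = (fun _ => 0) ->
  forall x, mulmv A x = (fun _ => 0) -> dotv x w = 0.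
Proof.
case=> _ [_ spanX] Xw0 x Ax0.
have [c xE] : exists c : vec k, forall j, x j = Rsum (fun s => c s * X s j).
  by apply: spanX => i; exact: (congr1 (fun f => f i) Ax0).
have -> : x = mulmv (trmat X) c.
  apply: functional_extensionality => j; rewrite xE.
  by apply: Rsum_ext => s; rewrite /trmat; ring.
by rewrite -dotv_mulmv Xw0 dotv0.
Qed.

Lemma mulmv_pinv_ker k n (X : mat k n) (Xd : mat n k) (u : vec n) :
  is_pinv X Xd -> mulmv X (pinv_correction X Xd u) = (fun _ => 0).
Proof.
case=> XXdX _; rewrite mulmvB -(mulmv_mulmat X Xd) -mulmv_mulmat XXdX.
by apply: functional_extensionality => s; ring.
Qed.

Lemma vpow_exp n (c a : vec n) : vpow c a = exp (dotv a (vln c)).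
Proof. by rewrite /vpow /Rprod /Rpower (big_morph exp exp_plus exp_0). Qed.

Lemma vln_exp n (z : vec n) : vln (fun i => exp (z i)) = z.
Proof. by apply: functional_extensionality => i; rewrite /vln ln_exp. Qed.

Lemma psi_pi k n (X : mat k n) (Xd : mat n k) (v : vec n) :
  psi Xd (fun s => vpow v (rowv X s)) = fun j => exp (mulmv Xd (mulmv X (vln v)) j).
Proof.
apply: functional_extensionality => j; rewrite /psi; congr exp.
by apply: Rsum_ext => s; rewrite vpow_exp ln_exp.
Qed.

Lemma vpow_colv m n (A : mat m n) (v : vec n) (c : vec m) (j : 'I_n) :
  posv v -> v j * vpow c (colv A j) = exp (vln v j + mulmv (trmat A) (vln c) j).
Proof. by move=> vpos; rewrite vpow_exp exp_plus exp_ln. Qed.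

Lemma vpow_shift m n (A : mat m n) (beta : vec m) (v y : vec n) (c : vec m) :
  posv v ->
  vpow (fun j => v j * vpow c (colv A j)) y
    = vpow v y * vpow c beta * exp (dotv (resid A y beta) (vln c)).
Proof.
move=> vpos; rewrite !vpow_exp -!exp_plus; congr exp.
have -> : vln (fun j => v j * vpow c (colv A j))
          = fun j => vln v j + mulmv (trmat A) (vln c) j.
  by apply: functional_extensionality => j; rewrite {1}/vln vpow_colv // ln_exp.
rewrite {1}/dotv (Rsum_ext (g := fun j => y j * vln v j
                   + y j * mulmv (trmat A) (vln c) j)) => [|j]; last ring.
rewrite Rsum_add -/(dotv y (vln v)) -/(dotv y (mulmv _ _)) dotv_mulmv.
rewrite Rplus_assoc /dotv -Rsum_add; congr Rplus; apply: Rsum_ext => i.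
by rewrite /resid /mulmv /trmat /=; ring.
Qed.

Lemma inS_ratio m n (A : mat m n) (beta : vec m) eps F (v : vec n) (c : vec m) :
  inS A beta eps F -> posv v -> posv c ->
  Rabs (F (fun j => v j * vpow c (colv A j)) / vpow c beta - F v)
    <= eps * Rabs (F v).
Proof.
move=> hS vpos cpos; set cb := vpow c beta.
have cb_pos : 0 < cb by rewrite /cb vpow_exp; exact: exp_pos.
have -> : F (fun j => v j * vpow c (colv A j)) / cb - F v
          = (F (fun j => v j * vpow c (colv A j)) - F v * cb) * / cb.
  by field; lra.
rewrite Rabs_mult Rabs_inv (Rabs_pos_eq cb); last lra.
apply: (Rmult_le_reg_r cb) => //; rewrite Rmult_assoc Rinv_l; last lra.
by rewrite Rmult_1_r; exact: hS.
Qed.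

(* |1 - e^zeta| <= e^L - 1 because 1 + t <= e^t at t = zeta and t = L. *)
Lemma Rabs_sub_mul_exp_le a T eps zeta L :
  0 <= eps -> Rabs (T - a) <= eps * Rabs a -> Rabs zeta <= L ->
  Rabs (a - T * exp zeta) <= Rabs a * ((1 + eps) * exp L - 1).
Proof.
move=> eps0 Ta zetaL.
have exp_zeta_le : exp zeta <= exp L.
  case: (Rle_lt_or_eq_dec zeta L (Rle_trans _ _ _ (Rle_abs zeta) zetaL)).
    by move/exp_increasing; lra.
  by move=> ->; lra.
have one_sub_exp : Rabs (1 - exp zeta) <= exp L - 1.
  have := Rle_abs (- zeta); rewrite Rabs_Ropp => mzeta.
  by apply: Rabs_le; have := exp_ineq1_le zeta; have := exp_ineq1_le L; lra.
have -> : a - T * exp zeta = a * (1 - exp zeta) + - (exp zeta * (T - a)) by ring.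
have := Rabs_triang (a * (1 - exp zeta)) (- (exp zeta * (T - a))).
rewrite Rabs_Ropp !Rabs_mult (Rabs_pos_eq (exp zeta)); last exact: Rlt_le (exp_pos _).
have := Rmult_le_compat_l _ _ _ (Rabs_pos a) one_sub_exp.
have := Rmult_le_compat _ _ _ _ (Rlt_le _ _ (exp_pos zeta)) (Rabs_pos _) exp_zeta_le Ta.
lra.
Qed.

Lemma Rabs_ln_le K x : 0 < K -> / K <= x <= K -> Rabs (ln x) <= ln K.
Proof.
move=> K0 [Kx xK]; have Kinv0 : 0 < / K by apply: Rinv_0_lt_compat.
have ln_le a b : 0 < a -> a <= b -> ln a <= ln b.
  by move=> a0; case/Rle_lt_or_eq_dec => [/(ln_increasing _ _ a0)|->]; lra.
have := ln_le _ _ Kinv0 Kx; have := ln_le _ _ (Rlt_le_trans _ _ _ Kinv0 Kx) xK.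
by rewrite ln_Rinv // => *; apply: Rabs_le; lra.
Qed.

Lemma Rabs_dotv_le p (a b : vec p) al be :
  (forall j, Rabs (a j) <= al) -> (forall j, Rabs (b j) <= be) ->
  Rabs (dotv a b) <= INR p * (al * be).
Proof.
move=> ha hb; rewrite -Rsum_const; apply: Rabs_Rsum_le => j; rewrite Rabs_mult.
exact: Rmult_le_compat (Rabs_pos _) (Rabs_pos _) (ha j) (hb j).
Qed.

Lemma Rabs_mulmv_le p q (B : mat p q) (x : vec q) b i :
  0 <= b -> (forall j, Rabs (x j) <= b) -> Rabs (mulmv B x i) <= mnorm B * b.
Proof.
move=> b0 hx; apply: (Rle_trans _ (Rsum (fun j => Rabs (B i j) * b))).
  apply: Rabs_Rsum_le => j; rewrite Rabs_mult.
  exact: Rmult_le_compat_l (Rabs_pos _) (hx j).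
rewrite Rsum_mulr; apply: Rmult_le_compat_r b0 _.
exact: Rmaxb_ge (fun i => Rsum (fun j => Rabs (B i j))) i.
Qed.

Lemma Rabs_pinv_correction_le k n (X : mat k n) (Xd : mat n k) (u : vec n) M L :
  0 <= M -> 0 <= L -> (forall s j, Rabs (X s j) <= M) ->
  (forall j, Rabs (u j) <= L) ->
  forall j, Rabs (pinv_correction X Xd u j) <= (INR n * M * mnorm Xd + 1) * L.
Proof.
move=> M0 L0 XM uL j.
have XuL : forall s, Rabs (mulmv X u s) <= INR n * (M * L).
  by move=> s; apply: Rabs_dotv_le => [l|l]; [exact: XM | exact: uL].
have := Rabs_mulmv_le Xd j (Rmult_le_pos _ _ (pos_INR n) (Rmult_le_pos _ _ M0 L0)) XuL.
have := Rabs_triang (mulmv Xd (mulmv X u) j) (- u j); rewrite Rabs_Ropp.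
have := uL j; rewrite /pinv_correction; unfold Rminus; lra.
Qed.

Lemma Rabs_resid_dotv_le m n k (A D : mat m n) (X : mat k n) (Xd : mat n k)
    (beta : vec m) (y v : vec n) delta K :
  1 < K -> (forall j, / K <= v j <= K) -> normInf (resid A y beta) <= delta ->
  Rabs (dotv (resid A y beta) (mulmv D (pinv_correction X Xd (vln v))))
    <= INR m * delta * mnorm D
       * (INR n * Rmaxb (fun s => Rmaxb (fun j => Rabs (X s j))) * mnorm Xd + 1)
       * ln K.
Proof.
move=> K1 vK res_delta.
set M := Rmaxb _.
have M0 : 0 <= M := Rmaxb_ge0 _.
have Xd0 : 0 <= mnorm Xd := Rmaxb_ge0 _.
have lnK0 : 0 <= ln K by rewrite -ln_1; apply: Rlt_le; apply: ln_increasing; lra.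
set W := (INR n * M * mnorm Xd + 1) * ln K.
have W0 : 0 <= W.
  apply: Rmult_le_pos _ lnK0.
  by have := Rmult_le_pos _ _ (Rmult_le_pos _ _ (pos_INR n) M0) Xd0; lra.
have wW : forall j, Rabs (pinv_correction X Xd (vln v) j) <= W.
  apply: Rabs_pinv_correction_le M0 lnK0 _ _ => [s l|j].
    exact: Rle_trans (Rmaxb_ge _ l) (Rmaxb_ge (fun s => Rmaxb _) s).
  by apply: Rabs_ln_le => //; lra.
rewrite (_ : _ * ln K = INR m * (delta * (mnorm D * W))); last by rewrite /W; ring.
apply: Rabs_dotv_le => [i|i]; last exact: Rabs_mulmv_le W0 wW.
exact: Rle_trans (Rmaxb_ge (fun i => Rabs (resid A y beta i)) i) res_delta.
Qed.

Theorem theorem3p2 (m n k : nat) (A : mat m n) (beta : vec m) (eps : R)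
  (F : vec n -> R) (y : vec n) (delta : R) (D : mat m n) (X : mat k n)
  (Xd : mat n k) (K : R) :
  (0 < k)%nat ->
  kernel_basis A X ->
  0 <= eps ->
  inS A beta eps F ->
  0 <= delta ->
  normInf (resid A y beta) <= delta ->
  is_pinv (trmat A) D ->
  is_pinv X Xd ->
  1 < K ->
  let G := fun w : vec k => F (psi Xd w) / vpow (psi Xd w) y in
  let M := Rmaxb (fun s => Rmaxb (fun j => Rabs (X s j))) in
  forall v : vec n, posv v ->
    (forall i, / K <= v i <= K) ->
    Rabs (F v - G (fun s => vpow v (rowv X s)) * vpow v y)
      <= Rabs (F v) *
         ((1 + eps) *
            Rpower K (INR m * delta * mnorm D * (INR n * M * mnorm Xd + 1)) - 1).
Proof.
move=> _ hker eps0 hS _ hres hD hX K1 G M v vpos vK.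
set w := pinv_correction X Xd (vln v).
set c := fun i => exp (mulmv D w i).
have cpos : posv c by move=> i; exact: exp_pos.
have Ac : mulmv (trmat A) (vln c) = w.
  rewrite vln_exp; apply: mulmv_pinv_orth hD _.
  exact: kernel_basis_orth hker (mulmv_pinv_ker _ hX).
have psiE : psi Xd (fun s => vpow v (rowv X s)) = fun j => v j * vpow c (colv A j).
  apply: functional_extensionality => j.
  by rewrite psi_pi vpow_colv // Ac /w /pinv_correction; congr exp; ring.
set zeta := - dotv (resid A y beta) (vln c).
have GE : G (fun s => vpow v (rowv X s)) * vpow v y
          = F (fun j => v j * vpow c (colv A j)) / vpow c beta * exp zeta.
  rewrite /G psiE (vpow_shift A beta) // /zeta exp_Ropp !vpow_exp.
  by field; repeat split; apply: Rgt_not_eq; apply: exp_pos.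
rewrite GE /Rpower; apply: Rabs_sub_mul_exp_le eps0 (inS_ratio hS vpos cpos) _.
by rewrite /zeta Rabs_Ropp vln_exp; exact: Rabs_resid_dotv_le.
Qed.
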